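(* Fix $n\ge1$, $\Phi\in\mathbb{R}^{n\times n}$ and $c>0$. For every $T\ge1$ let $\tilde W(0),\dots,\tilde W(T-1)\in\mathbb{R}^{n\times n}$ satisfy $\|\tilde W(t)\|_2\le c$, and set $W(t)=I+\frac1T\tilde W(t)$. Then there exist real constants $\lambda_1\le\lambda_2$ and $y_1,y_2$ (independent of $T,\alpha,\beta$) such that for all $T$, all $\alpha\in(0,1]$ and all $\beta\in(1-\alpha,1]$, $$\Big\|\frac{dL_{\alpha T}}{du(\beta T)}\Big\|_F\ge (e^{\lambda_1}-y_1)e^{\lambda_1},\qquad \Big\|\frac{dL_{\alpha T}}{du(\beta T)}\Big\|_F\le (e^{\lambda_2}-y_2)e^{\lambda_2}.$$
   Context: Write $W^{s}=W(s-1)\cdots W(0)$ for $0\le s\le T$ ($W^0=I$). For a horizon $h\in\{1,\dots,T\}$ and block $t\in\{0,\dots,T-1\}$, the MPC gradient is $g_h(W(t))=\nabla_{W(t)}\frac12\|W^{\min(t+h,T)}-\Phi\|_F^2$. The notation $\frac{dL_{\alpha T}}{du(\beta T)}$ denotes $g_h(W(t))$ with $h=\lfloor\alpha T\rfloor$ and $t=\min(\lfloor\beta T\rfloor,T-1)$. $\|\cdot\|_F$ is the Frobenius norm, $\|\cdot\|_2$ the spectral norm. *)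

From HB Require Import structures.
From mathcomp Require Import all_boot all_order all_algebra.
From mathcomp Require Import all_classical all_reals all_analysis.
Set Implicit Arguments. Unset Strict Implicit. Unset Printing Implicit Defensive.
Import Order.TTheory GRing.Theory Num.Theory.
Import numFieldNormedType.Exports.
Local Open Scope classical_set_scope.
Local Open Scope ring_scope.

Section Defs.
Variable R : realType.

Definition frob (m k : nat) (A : 'M[R]_(m, k)) : R :=
  Num.sqrt (\sum_(i < m) \sum_(j < k) A i j ^+ 2).

Definition specnorm (n : nat) (A : 'M[R]_n) : R :=
  sup [set frob (A *m x) | x in [set x : 'cV[R]_n | frob x = 1]].

Fixpoint prodW (n : nat) (W : nat -> 'M[R]_n) (s : nat) : 'M[R]_n :=
  match s with
  | 0 => 1%:M
  | s'.+1 => W s' *m prodW W s'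
  end.

Definition upd (n : nat) (W : nat -> 'M[R]_n) (t : nat) (M : 'M[R]_n) :
  nat -> 'M[R]_n := fun k => if k == t then M else W k.

Definition grad_block (n : nat) (f : (nat -> 'M[R]_n) -> R)
  (W : nat -> 'M[R]_n) (t : nat) : 'M[R]_n :=
  \matrix_(i, j) derive1 (fun s : R => f (upd W t (W t + s *: delta_mx i j))) 0.

Definition lossW (n : nat) (Phi : 'M[R]_n) (m : nat) (W : nat -> 'M[R]_n) : R :=
  2^-1 * frob (prodW W m - Phi) ^+ 2.

Definition gMPC (n : nat) (W : nat -> 'M[R]_n) (Phi : 'M[R]_n) (T h t : nat)
  : 'M[R]_n := grad_block (lossW Phi (minn (t + h) T)) W t.

Definition Wfam (n : nat) (Wt : nat -> nat -> 'M[R]_n) (T : nat) :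
  nat -> 'M[R]_n := fun t => 1%:M + (T%:R)^-1 *: Wt T t.

Definition hidx (alpha : R) (T : nat) : nat := Num.truncn (alpha * T%:R).
Definition tidx (beta : R) (T : nat) : nat := minn (Num.truncn (beta * T%:R)) T.-1.

Definition dLdu (n : nat) (Wt : nat -> nat -> 'M[R]_n) (Phi : 'M[R]_n)
  (T : nat) (alpha beta : R) : 'M[R]_n :=
  gMPC (Wfam Wt T) Phi T (hidx alpha T) (tidx beta T).

End Defs.

From HB Require Import structures.
From mathcomp Require Import all_boot all_order all_algebra.
From mathcomp Require Import all_classical all_reals all_analysis.
From mathcomp Require Import ring.
Import Order.TTheory GRing.Theory Num.Theory.
Local Open Scope ring_scope.
Set Implicit Arguments. Unset Strict Implicit. Unset Printing Implicit Defensive.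

(* The loss is quadratic along each direction [delta_mx i j] of block [t], so an
   entry of the gradient is the Frobenius inner product of the residual
   [W^m - Phi] with [W(m-1)...W(t+1) (delta_mx i j) W(t-1)...W(0)].  Measured
   in the max-row-sum norm, which is submultiplicative and dominated by
   [n] times the spectral norm, every [W(s)] has norm at most [1 + n c / T], so
   every partial product of at most [T] factors has norm at most
   [(1 + n c / T)^T <= exp (n c)].  Hence the gradient is bounded uniformly in
   [T], the horizon and the block. *)

Section RowSum.
Variable R : numDomainType.

Definition rowsum_le (m k : nat) (A : 'M[R]_(m, k)) (K : R) :=
  forall i, \sum_j `|A i j| <= K.

Lemma rowsum_le_entry m k (A : 'M[R]_(m, k)) K i j :
  rowsum_le A K -> `|A i j| <= K.
Proof.
move=> hA; apply: le_trans (hA i).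
by rewrite (bigD1 j) //= lerDl sumr_ge0.
Qed.

Lemma rowsum_le_ge0 m k (A : 'M[R]_(m, k)) K (i : 'I_m) : rowsum_le A K -> 0 <= K.
Proof. by move=> hA; apply: le_trans (hA i); apply: sumr_ge0. Qed.

Lemma rowsum_leW m k (A : 'M[R]_(m, k)) a b : a <= b -> rowsum_le A a -> rowsum_le A b.
Proof. by move=> hab hA i; apply: le_trans (hA i) hab. Qed.

Lemma rowsum_le_sum_abs m k (A : 'M[R]_(m, k)) : rowsum_le A (\sum_i \sum_j `|A i j|).
Proof. by move=> i; rewrite (bigD1 i) //= lerDl sumr_ge0 // => i' _; apply: sumr_ge0. Qed.

Lemma rowsum_le0 m k K : 0 <= K -> rowsum_le (0 : 'M[R]_(m, k)) K.
Proof. by move=> K0 i; rewrite big1 // => j _; rewrite mxE normr0. Qed.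

Lemma rowsum_le_add m k (A B : 'M[R]_(m, k)) a b :
  rowsum_le A a -> rowsum_le B b -> rowsum_le (A + B) (a + b).
Proof.
move=> hA hB i; apply: le_trans (_ : \sum_j (`|A i j| + `|B i j|) <= _).
  by apply: ler_sum => j _; rewrite mxE ler_normD.
by rewrite big_split lerD.
Qed.

Lemma rowsum_le_opp m k (A : 'M[R]_(m, k)) a : rowsum_le A a -> rowsum_le (- A) a.
Proof. by move=> hA i; under eq_bigr do rewrite mxE normrN; apply: hA. Qed.

Lemma rowsum_le_scale m k x (A : 'M[R]_(m, k)) a :
  rowsum_le A a -> rowsum_le (x *: A) (`|x| * a).
Proof.
move=> hA i; under eq_bigr do rewrite mxE normrM.
by rewrite -mulr_sumr ler_wpM2l.
Qed.

Lemma rowsum_le_mul m k p (A : 'M[R]_(m, k)) (B : 'M[R]_(k, p)) a b :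
  0 <= b -> rowsum_le A a -> rowsum_le B b -> rowsum_le (A *m B) (a * b).
Proof.
move=> b0 hA hB i.
apply: le_trans (_ : \sum_j \sum_l `|A i l| * `|B l j| <= _).
  apply: ler_sum => j _; rewrite mxE; apply: le_trans (ler_norm_sum _ _ _) _.
  by apply: ler_sum => l _; rewrite normrM.
rewrite exchange_big /=; apply: le_trans (_ : \sum_l `|A i l| * b <= _).
  by apply: ler_sum => l _; rewrite -mulr_sumr ler_wpM2l.
by rewrite -mulr_suml ler_wpM2r.
Qed.

Lemma rowsum_le_1 n : rowsum_le (1%:M : 'M[R]_n) 1.
Proof.
move=> i; rewrite (bigD1 i) //= big1 => [|j hj].
  by rewrite mxE eqxx mulr1n normr1 addr0.
by rewrite mxE eq_sym (negbTE hj) mulr0n normr0.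
Qed.

Lemma rowsum_le_delta m k (i0 : 'I_m) (j0 : 'I_k) : rowsum_le (delta_mx i0 j0) 1.
Proof.
move=> i; rewrite (bigD1 j0) //= big1 => [|j hj].
  by rewrite mxE eqxx andbT addr0; case: (i == i0); rewrite ?normr1 ?normr0.
by rewrite mxE (negbTE hj) andbF normr0.
Qed.

Lemma abs_sum_entrywise_mul_le m k (M N : 'M[R]_(m, k)) a b :
  rowsum_le M a -> rowsum_le N b ->
  `|\sum_i \sum_j M i j * N i j| <= m%:R * (a * b).
Proof.
move=> hM hN; apply: le_trans (ler_norm_sum _ _ _) _.
rewrite -[m in m%:R]card_ord mulr_natl -sumr_const; apply: ler_sum => i _.
apply: le_trans (ler_norm_sum _ _ _) _.
apply: le_trans (_ : \sum_j `|M i j| * b <= _).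
  by apply: ler_sum => j _; rewrite normrM ler_wpM2l // (rowsum_le_entry _ _ hN).
by rewrite -mulr_suml ler_wpM2r // (rowsum_le_ge0 i hN).
Qed.

End RowSum.

Section Frobenius.
Variable R : realType.

Lemma frob_sqr m k (A : 'M[R]_(m, k)) : frob A ^+ 2 = \sum_i \sum_j A i j ^+ 2.
Proof. by rewrite sqr_sqrtr // sumr_ge0 // => i _; apply: sumr_ge0 => j _; apply: sqr_ge0. Qed.

Lemma frob_ge0 m k (A : 'M[R]_(m, k)) : 0 <= frob A.
Proof. exact: sqrtr_ge0. Qed.

Lemma frob_entry m k (A : 'M[R]_(m, k)) i j : `|A i j| <= frob A.
Proof.
rewrite -ler_sqr ?nnegrE ?frob_ge0 // frob_sqr real_normK ?num_real //.
rewrite (bigD1 i) //= (bigD1 j) //= -addrA lerDl addr_ge0 ?sumr_ge0 //.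
  by move=> j' _; apply: sqr_ge0.
by move=> i' _; apply: sumr_ge0 => j' _; apply: sqr_ge0.
Qed.

Lemma frob_le_sum_abs m k (A : 'M[R]_(m, k)) : frob A <= \sum_i \sum_j `|A i j|.
Proof.
set S := \sum_i _; have S0 : 0 <= S by apply: sumr_ge0 => i _; apply: sumr_ge0.
rewrite -ler_sqr ?nnegrE ?frob_ge0 // frob_sqr expr2 {2}/S mulr_sumr.
apply: ler_sum => i _; rewrite mulr_sumr; apply: ler_sum => j _.
rewrite -real_normK ?num_real // expr2 mulrC ler_wpM2r //.
exact: rowsum_le_entry (rowsum_le_sum_abs A).
Qed.

Lemma frob_le_entrywise m k (A : 'M[R]_(m, k)) Y :
  (forall i j, `|A i j| <= Y) -> frob A <= (m * k)%:R * Y.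
Proof.
move=> hA; apply: le_trans (frob_le_sum_abs A) _.
rewrite natrM -mulrA !mulr_natl -[k in Y *+ k]card_ord -[m in _ *+ m]card_ord -!sumr_const.
by apply: ler_sum => i _; apply: ler_sum => j _.
Qed.

Lemma frob_delta m k (i0 : 'I_m) (j0 : 'I_k) : frob (delta_mx i0 j0 : 'M[R]_(m, k)) = 1.
Proof.
rewrite /frob (bigD1 i0) //= (bigD1 j0) //= !big1 ?addr0 ?mxE ?eqxx ?expr1n ?sqrtr1 //.
  by move=> i hi; apply: big1 => j _; rewrite mxE (negbTE hi) expr0n.
by move=> j hj; rewrite mxE (negbTE hj) andbF expr0n.
Qed.

Lemma specnorm_entry n (A : 'M[R]_n) i j : `|A i j| <= specnorm A.
Proof.
rewrite /specnorm; set S := (X in sup X).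
have ubS : has_ubound S.
  exists (\sum_i \sum_(l < 1) \sum_k `|A i k|) => _ [x x1 <-].
  apply: le_trans (frob_le_sum_abs _) _.
  apply: ler_sum => i' _; apply: ler_sum => l _; rewrite mxE.
  apply: le_trans (ler_norm_sum _ _ _) _; apply: ler_sum => k _.
  by rewrite normrM ler_piMr // -x1 frob_entry.
apply: le_trans (ub_le_sup ubS _); last by exists (delta_mx j 0) => //; apply: frob_delta.
by apply: le_trans (frob_entry _ i 0); rewrite -colE mxE.
Qed.

Lemma rowsum_le_specnorm n (A : 'M[R]_n) c :
  specnorm A <= c -> rowsum_le A (n%:R * c).
Proof.
move=> hA i; rewrite -[n in n%:R]card_ord mulr_natl -sumr_const.
by apply: ler_sum => j _; apply: le_trans (specnorm_entry A i j) hA.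
Qed.

Lemma derive1_quadratic (a b c x : R) :
  derive1 (fun s : R => a + s * b + s ^+ 2 * c) x = b + 2 * c * x.
Proof.
have -> : (fun s : R => a + s * b + s ^+ 2 * c) = horner (a%:P + b *: 'X + c *: 'X^2).
  by apply/funext => s; rewrite !hornerE /=; ring.
by rewrite -derivE !derivD !derivZ derivC derivX derivXn !hornerE /=; ring.
Qed.

Lemma sum_sqr_addZ m k (M N : 'M[R]_(m, k)) (s : R) :
  \sum_i \sum_j (M + s *: N) i j ^+ 2 = \sum_i \sum_j M i j ^+ 2
    + s * (2 * \sum_i \sum_j M i j * N i j) + s ^+ 2 * \sum_i \sum_j N i j ^+ 2.
Proof.
rewrite !mulr_sumr -!big_split /=; apply: eq_bigr => i _.
rewrite !mulr_sumr -!big_split /=; apply: eq_bigr => j _.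
by rewrite !mxE; ring.
Qed.

Lemma derive1_half_frob_sqr m k (M N : 'M[R]_(m, k)) :
  derive1 (fun s : R => 2^-1 * frob (M + s *: N) ^+ 2) 0 =
  \sum_i \sum_j M i j * N i j.
Proof.
set d := \sum_i _.
have -> : (fun s => 2^-1 * frob (M + s *: N) ^+ 2) = (fun s =>
    2^-1 * frob M ^+ 2 + s * d + s ^+ 2 * (2^-1 * frob N ^+ 2)).
  by apply/funext => s; rewrite !frob_sqr sum_sqr_addZ -/d; field.
by rewrite derive1_quadratic mulr0 addr0.
Qed.

End Frobenius.

Section Products.
Variables (R : realType) (n : nat).
Implicit Types (W : nat -> 'M[R]_n) (D X : 'M[R]_n).

Lemma eq_prodW W W' k : (forall s, (s < k)%N -> W s = W' s) -> prodW W k = prodW W' k.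
Proof.
elim: k => [//|k IH] hW /=.
by rewrite hW // IH // => s hs; apply: hW; apply: ltnW.
Qed.

Lemma prodW_add W a k : prodW W (a + k) = prodW (fun s => W (a + s)%N) k *m prodW W a.
Proof.
elim: k => [|k IH]; first by rewrite addn0 /= mul1mx.
by rewrite addnS /= IH mulmxA.
Qed.

Lemma prodW_upd_ge W t X m : (m <= t)%N -> prodW (upd W t X) m = prodW W m.
Proof. by move=> hm; apply: eq_prodW => s hs; rewrite /upd ltn_eqF // (leq_trans hs). Qed.

Lemma prodW_upd W t X m : (t < m)%N ->
  prodW (upd W t X) m = prodW (fun s => W (t.+1 + s)%N) (m - t.+1) *m X *m prodW W t.
Proof.
move=> htm; rewrite -{1}(subnKC htm) prodW_add /= prodW_upd_ge //.
rewrite /upd eqxx mulmxA; congr (_ *m _ *m _).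
by apply: eq_prodW => s _; rewrite gtn_eqF // ltnS leq_addr.
Qed.

(* Derivative of [X |-> prodW (upd W t X) m] at [X = W t] in the direction [D]. *)
Definition prodW_dir W t m D : 'M[R]_n :=
  if (t < m)%N then prodW (fun s => W (t.+1 + s)%N) (m - t.+1) *m D *m prodW W t else 0.

Lemma prodW_upd_addZ W t m D (s : R) :
  prodW (upd W t (W t + s *: D)) m = prodW W m + s *: prodW_dir W t m D.
Proof.
rewrite /prodW_dir; case: ltnP => htm; last by rewrite prodW_upd_ge // scaler0 addr0.
have -> : prodW W m = prodW (upd W t (W t)) m.
  by apply: eq_prodW => s' _; rewrite /upd; case: eqP => [->|].
by rewrite !prodW_upd // mulmxDr mulmxDl -scalemxAr -scalemxAl.
Qed.

Lemma rowsum_le_prodW W k q : 0 <= q ->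
  (forall s, (s < k)%N -> rowsum_le (W s) q) -> rowsum_le (prodW W k) (q ^+ k).
Proof.
move=> q0; elim: k => [|k IH] hW /=; first by rewrite expr0; apply: rowsum_le_1.
rewrite exprS; apply: rowsum_le_mul; first exact: exprn_ge0.
  exact: hW.
by apply: IH => s hs; apply: hW; apply: ltnW.
Qed.

Lemma grad_block_lossW Phi m W t i j :
  grad_block (lossW Phi m) W t i j =
  \sum_k \sum_l (prodW W m - Phi) k l * prodW_dir W t m (delta_mx i j) k l.
Proof.
rewrite mxE -derive1_half_frob_sqr /lossW.
by under eq_fun do rewrite prodW_upd_addZ addrAC.
Qed.

End Products.

Section BoundedFactors.
Variables (R : realType) (n : nat) (W : nat -> 'M[R]_n) (T : nat) (q E : R).
Hypotheses (q_ge1 : 1 <= q) (qT_le : q ^+ T <= E).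
Hypothesis W_le : forall s, (s < T)%N -> rowsum_le (W s) q.

Let q_ge0 : 0 <= q. Proof. exact: le_trans ler01 q_ge1. Qed.

Let qpow_le k : (k <= T)%N -> q ^+ k <= E.
Proof. by move=> hk; apply: le_trans qT_le; rewrite ler_weXn2l. Qed.

Let E_ge0 : 0 <= E. Proof. exact: le_trans (exprn_ge0 _ q_ge0) (qpow_le (leq0n T)). Qed.

Lemma rowsum_le_prodW_prefix k : (k <= T)%N -> rowsum_le (prodW W k) E.
Proof.
move=> hk; apply: rowsum_leW (qpow_le hk) (rowsum_le_prodW q_ge0 _) => s hs.
by apply: W_le; apply: leq_trans hk.
Qed.

Lemma rowsum_le_prodW_shift a k :
  (a + k <= T)%N -> rowsum_le (prodW (fun s => W (a + s)%N) k) E.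
Proof.
move=> hak; apply: rowsum_leW (qpow_le (leq_trans (leq_addl a k) hak)) _.
apply: rowsum_le_prodW q_ge0 _ => s hs.
by apply: W_le; apply: leq_trans hak; rewrite ltn_add2l.
Qed.

Lemma rowsum_le_prodW_dir t m D d : (m <= T)%N -> 0 <= d ->
  rowsum_le D d -> rowsum_le (prodW_dir W t m D) (E * d * E).
Proof.
move=> hm d0 hD; rewrite /prodW_dir; case: ltnP => htm; last first.
  by apply: rowsum_le0; rewrite !mulr_ge0.
apply: rowsum_le_mul => //; last first.
  by apply: rowsum_le_prodW_prefix; apply: leq_trans hm; apply: ltnW.
apply: rowsum_le_mul => //; apply: rowsum_le_prodW_shift.
by rewrite subnKC.
Qed.

Lemma frob_gMPC_le Phi F h t : rowsum_le Phi F ->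
  frob (gMPC W Phi T h t) <= (n * n)%:R * (n%:R * ((E + F) * (E * E))).
Proof.
move=> hPhi; apply: frob_le_entrywise => i j; rewrite /gMPC grad_block_lossW.
have hm : (minn (t + h) T <= T)%N by rewrite geq_minr.
have := rowsum_le_prodW_dir t hm ler01 (rowsum_le_delta _ i j).
rewrite mulr1; apply: abs_sum_entrywise_mul_le.
exact: rowsum_le_add (rowsum_le_prodW_prefix hm) (rowsum_le_opp hPhi).
Qed.

End BoundedFactors.

Lemma expr_1Ddiv_le_expR (R : realType) (x : R) (T : nat) : 0 <= x -> (0 < T)%N ->
  (1 + T%:R^-1 * x) ^+ T <= expR x.
Proof.
move=> x0 T0; apply: le_trans (_ : expR (T%:R^-1 * x) ^+ T <= _).
  by rewrite lerXn2r ?nnegrE ?expR_ge0 ?expR_ge1Dx // addr_ge0 ?mulr_ge0 ?invr_ge0.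
by rewrite -expRM_natl mulrA mulfV ?mul1r // pnatr_eq0 -lt0n.
Qed.

Lemma rowsum_le_Wfam (R : realType) n (Wt : nat -> nat -> 'M[R]_n) T c s :
  specnorm (Wt T s) <= c -> rowsum_le (Wfam Wt T s) (1 + T%:R^-1 * (n%:R * c)).
Proof.
move=> hc; apply: rowsum_le_add; first exact: rowsum_le_1.
rewrite -[T%:R^-1 in X in rowsum_le _ X]ger0_norm ?invr_ge0 //.
exact/rowsum_le_scale/rowsum_le_specnorm.
Qed.

Theorem lemma3 (R : realType) (n : nat) (hn : (0 < n)%N) (Phi : 'M[R]_n)
  (c : R) (hc : 0 < c) (Wt : nat -> nat -> 'M[R]_n)
  (hWt : forall T t : nat, (0 < T)%N -> (t < T)%N -> specnorm (Wt T t) <= c) :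
  exists l1 l2 y1 y2 : R, l1 <= l2 /\
    forall (T : nat) (alpha beta : R), (0 < T)%N ->
      0 < alpha <= 1 -> 1 - alpha < beta <= 1 ->
      (expR l1 - y1) * expR l1 <= frob (dLdu Wt Phi T alpha beta) /\
      frob (dLdu Wt Phi T alpha beta) <= (expR l2 - y2) * expR l2.
Proof.
set E := expR (n%:R * c); set F := \sum_i \sum_j `|Phi i j|.
set B := (n * n)%:R * (n%:R * ((E + F) * (E * E))).
(* With [y1 = 1] the lower bound is the trivial [0 <= frob _], and [y2 = 1 - B]
   turns the upper bound into the uniform bound [B]; neither bound needs the
   ranges of [alpha] and [beta], nor [0 < n]. *)
exists 0, 0, 1, (1 - B); split => // T alpha beta T0 _ _.
rewrite expR0 subrr mul0r opprB addrC subrK mulr1; split; first exact: frob_ge0.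
apply: (frob_gMPC_le (q := 1 + T%:R^-1 * (n%:R * c))) (rowsum_le_sum_abs Phi).
- by rewrite lerDl mulr_ge0 ?invr_ge0 ?mulr_ge0 // ltW.
- by apply: expr_1Ddiv_le_expR; rewrite ?mulr_ge0 // ltW.
- by move=> s hs; apply/rowsum_le_Wfam/hWt.
Qed.
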